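(* Let $\Theta=\{\sigma_1,\dots,\sigma_q\}$ be a regular set of pairwise commuting Pauli operators on $k$ (memory) qubits, $\sigma_j=\nu_j\sigma_{X,j}\sigma_{Z,j}$, with characteristic numbers $\eta_j$. Add ancilla qubits $(0,j)$ and $(1,j)$, $j=1,\dots,q$, with Pauli operators $X_{\alpha,j},Y_{\alpha,j},Z_{\alpha,j}$. For any memory state $|\psi\rangle$ let $|\Psi_i\rangle=|\psi\rangle\otimes\bigotimes_j|+\rangle_{0,j}\otimes\bigotimes_j|y+\rangle_{1,j}$ (with $X|+\rangle=|+\rangle$, $Y|y+\rangle=|y+\rangle$). For outcomes $\mu_{X,j},\mu_{Z,j},\mu_{0,j},\mu_{1,j}\in\{\pm1\}$ define $$|\Psi_f\rangle=\Big(\prod_j\sigma_{Z,j}^{c_j}\Big)\Big(\prod_j\tfrac{1+\mu_{1,j}Y_{1,j}}2\Big)\Big(\prod_j\tfrac{1+\mu_{0,j}X_{0,j}}2\Big)\Big(\prod_j\tfrac{1+\mu_{Z,j}\sigma_{Z,j}Z_{0,j}^{1-\eta_j}X_{1,j}^{\eta_j}}2\Big)\Big(\prod_j\tfrac{1+\mu_{X,j}\sigma_{X,j}Z_{0,j}^{1-\eta_j}Z_{1,j}^{\eta_j}}2\Big)|\Psi_i\rangle,$$ where $c_j=1$ if ($\eta_j=0$ and $\mu_{0,j}=-1$) or ($\eta_j=1$ and $\mu_{1,j}=-1$), and $c_j=0$ otherwise. Then $$|\Psi_f\rangle=\Big(\prod_{j=1}^q\tfrac{1+(-i)^{\eta_j}\nu_j\mu_{X,j}\mu_{Z,j}\sigma_j}{2}\Big)|\psi\rangle\otimes|\phi\rangle$$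 for some ancilla state $|\phi\rangle$ whose norm $\langle\phi|\phi\rangle$ does not depend on the outcomes $\mu_{X,j},\mu_{Z,j}$. (That is, the protocol realises the simultaneous measurement of $\Theta$ with outcome $(-i)^{\eta_j}\nu_j\mu_{X,j}\mu_{Z,j}$ for $\sigma_j$.)
   Context: Every Pauli operator $\sigma$ (with phase) on a set of qubits can be written uniquely as $\sigma=\nu\sigma_X\sigma_Z$ with $\nu\in\{\pm1,\pm i\}$, $\sigma_X$ a tensor product of Pauli $X$ and identity factors, and $\sigma_Z$ a tensor product of Pauli $Z$ and identity factors; here the operators $\sigma_j$ are Hermitian. The characteristic number $\eta_j$ of $\sigma_j$ is $0$ if $\sigma_{X,j}$ and $\sigma_{Z,j}$ commute and $1$ if they anticommute (so $\nu_j=\pm1$ when $\eta_j=0$ and $\nu_j=\pm i$ when $\eta_j=1$). A set $\{\sigma_1,\dots,\sigma_q\}$ is regular if $\sigma_{X,i}$ commutes with $\sigma_{Z,j}$ for all $i\neq j$. Memory operators act on the memory factor only; ancilla operators act on the indicated ancilla qubit only. *)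

(* Qubit registers are modelled concretely: for a finite
   type I of qubit labels, a computational-basis configuration is a
   {ffun I -> bool} and a (not necessarily normalised) state is a
   {ffun conf I -> C}, C an arbitrary numeric algebraically closed field
   (e.g. algC). *)
From HB Require Import structures.
From mathcomp Require Import all_boot all_order all_algebra.
Set Implicit Arguments. Unset Strict Implicit. Unset Printing Implicit Defensive.
Import Order.TTheory GRing.Theory Num.Theory.
Local Open Scope ring_scope.

Notation conf I := {ffun I -> bool}.
Notation st C I := {ffun conf I -> C}.
Notation op C I := (st C I -> st C I).

Section Paulis.
Variables (C : numClosedFieldType) (I : finType).

(* measurement outcome encoded as a bool: false ~ +1, true ~ -1 *)
Definition sgnb (b : bool) : C := if b then -1 else 1.

Definition xorv (x a : conf I) : conf I := [ffun i => addb (x i) (a i)].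
Definition delta (i : I) : conf I := [ffun l => l == i].

(* tensor products of Pauli X factors (X on the qubits where a is true)
   and of Pauli Z factors (Z on the qubits where b is true) *)
Definition PX (a : conf I) : op C I := fun s => [ffun x : conf I => s (xorv x a)].
Definition PZ (b : conf I) : op C I :=
  fun s => [ffun x : conf I => (-1) ^+ #|[pred i | b i && x i]| * s x].

Definition Xq (i : I) : op C I := PX (delta i).
Definition Zq (i : I) : op C I := PZ (delta i).
Definition Yq (i : I) : op C I := fun s => [ffun x => 'i * Xq i (Zq i s) x].

Definition opow (P : op C I) (e : bool) : op C I := if e then P else id.

Definition projc (c : C) (P : op C I) : op C I :=
  fun s => [ffun x => (s x + c * P s x) / 2].

Definition dot (s t : st C I) : C := \sum_x (s x)^* * t x.
Definition norm2 (s : st C I) : C := dot s s.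

Definition herm_op (A : op C I) := forall s t, dot s (A t) = dot (A s) t.
Definition opcomm (A B : op C I) := forall s, A (B s) = B (A s).
End Paulis.

Definition oprod (C : numClosedFieldType) (I J : finType) (F : J -> op C I) : op C I :=
  foldr (fun j acc => F j \o acc) id (enum J).

(* Full register: memory qubits inl i (i : 'I_k), ancilla qubits
   inr (alpha, j) with alpha = false for ancilla (0,j), true for (1,j). *)
Definition fullI (k q : nat) := ('I_k + (bool * 'I_q))%type.

Definition tensor (C : numClosedFieldType) (k q : nat)
  (psi : st C 'I_k) (phi : st C (bool * 'I_q)) : st C (fullI k q) :=
  [ffun x : conf (fullI k q) => psi [ffun i => x (inl i)] * phi [ffun p => x (inr p)]].

Definition memv (k q : nat) (a : conf 'I_k) : conf (fullI k q) :=
  [ffun l => match l with inl i => a i | inr _ => false end].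

Definition anc (k q : nat) (alpha : bool) (j : 'I_q) : fullI k q := inr (alpha, j).

Definition sigma (C : numClosedFieldType) (k q : nat)
  (a b : 'I_q -> conf 'I_k) (nu : 'I_q -> C) (j : 'I_q) : op C 'I_k :=
  fun s => [ffun x => nu j * PX (a j) (PZ (b j) s) x].

(* bigotimes_j |+>_{0,j} (x) bigotimes_j |y+>_{1,j},
   |+> = (|0>+|1>)/sqrt 2, |y+> = (|0> + i|1>)/sqrt 2 *)
Definition anc_init (C : numClosedFieldType) (q : nat) : st C (bool * 'I_q) :=
  [ffun y : conf (bool * 'I_q) => \prod_(j : 'I_q)
      ((sqrtC (2 : C))^-1 * ((sqrtC (2 : C))^-1 * (if y (true, j) then 'i else 1)))].

Definition Psi_i (C : numClosedFieldType) (k q : nat) (psi : st C 'I_k) : st C (fullI k q) :=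
  tensor psi (anc_init C q).

Definition Psi_f (C : numClosedFieldType) (k q : nat)
  (a b : 'I_q -> conf 'I_k) (eta : 'I_q -> bool)
  (muX muZ mu0 mu1 : {ffun 'I_q -> bool}) (psi : st C 'I_k) : st C (fullI k q) :=
  let SX j : op C (fullI k q) := PX (memv q (a j)) in
  let SZ j : op C (fullI k q) := PZ (memv q (b j)) in
  let c j := if eta j then mu1 j else mu0 j in
  (oprod (fun j => opow (SZ j) (c j))
   \o oprod (fun j => projc (sgnb C (mu1 j)) (Yq (C := C) (anc k true j)))
   \o oprod (fun j => projc (sgnb C (mu0 j)) (Xq (C := C) (anc k false j)))
   \o oprod (fun j => projc (sgnb C (muZ j))
         (SZ j \o opow (Zq (C := C) (anc k false j)) (~~ eta j)
               \o opow (Xq (C := C) (anc k true j)) (eta j)))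
   \o oprod (fun j => projc (sgnb C (muX j))
         (SX j \o opow (Zq (C := C) (anc k false j)) (~~ eta j)
               \o opow (Zq (C := C) (anc k true j)) (eta j))))
  (Psi_i q psi).

Definition meas (C : numClosedFieldType) (k q : nat)
  (a b : 'I_q -> conf 'I_k) (nu : 'I_q -> C) (eta : 'I_q -> bool)
  (muX muZ : {ffun 'I_q -> bool}) : op C 'I_k :=
  oprod (fun j => projc ((- 'i) ^+ eta j * nu j * sgnb C (muX j) * sgnb C (muZ j))
                        (sigma a b nu j)).

(* For each j, the five stages belonging to j involve only the memory Paulis sigma_{X,j},
   sigma_{Z,j} and the ancilla pair (0,j), (1,j).  Regularity makes every stage of pair i
   commute with every stage of pair j <> i, so the protocol factors into a product over j
   of per-pair gadgets.  A gadget applied to a state in which pair j is still unentangled in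
   |+>|y+> leaves that pair unentangled and applies (1 + (-i)^eta_j nu_j muX_j muZ_j sigma_j)/2
   to the memory; this is a finite computation over eta_j, mu_{0,j}, mu_{1,j} and the two
   qubits of the pair, using nu_j^2 = (-1)^eta_j (from hermiticity) and
   sigma_{X,j} sigma_{Z,j} = (-1)^eta_j sigma_{Z,j} sigma_{X,j}.  The final amplitude of each
   pair is a unit phase times an amplitude independent of muX, muZ, whence the norm claim. *)

From HB Require Import structures.
From mathcomp Require Import all_boot all_order all_algebra.
From mathcomp Require Import ring.
Set Implicit Arguments. Unset Strict Implicit. Unset Printing Implicit Defensive.
Import Order.TTheory GRing.Theory Num.Theory.
Local Open Scope ring_scope.

Section PauliAlgebra.
Variables (C : numClosedFieldType) (I : finType).
Implicit Types (u v x : conf I) (s t : st C I) (O A B P : op C I).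

Definition zsign v x : C := \prod_l (if v l && x l then -1 else 1).

Lemma PXE u s x : PX u s x = s (xorv x u).
Proof. by rewrite ffunE. Qed.

Lemma PZE v s x : PZ v s x = zsign v x * s x.
Proof. by rewrite ffunE /zsign -big_mkcond /= prodr_const. Qed.

Lemma xorvK x u : xorv (xorv x u) u = x.
Proof. by apply/ffunP=> i; rewrite !ffunE addbK. Qed.

Lemma xorvAC x u u' : xorv (xorv x u) u' = xorv (xorv x u') u.
Proof. by apply/ffunP=> i; rewrite !ffunE -!addbA [addb (u i) _]addbC. Qed.

Lemma zsign_xorv v x u : zsign v (xorv x u) = zsign v x * zsign v u.
Proof.
rewrite /zsign -big_split /=; apply: eq_bigr => l _; rewrite ffunE.
by case: (v l); case: (x l); case: (u l); rewrite /= ?mulr1 ?mul1r ?mulrNN ?mulr1.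
Qed.

Lemma zsign_sqr v x : zsign v x * zsign v x = 1.
Proof.
rewrite /zsign -big_split /=; apply: big1 => l _.
by case: (_ && _); rewrite ?mulrNN mulr1.
Qed.

Lemma zsign_pm1 v x : zsign v x = 1 \/ zsign v x = -1.
Proof.
rewrite /zsign -big_mkcond /= prodr_const -signr_odd.
by case: odd; [right | left].
Qed.

Lemma zsign_disjoint v u : (forall l, ~~ (v l && u l)) -> zsign v u = 1.
Proof. by move=> vu; apply: big1 => l _; rewrite (negbTE (vu l)). Qed.

Lemma zsign0 v : zsign v [ffun=> false] = 1.
Proof. by apply: zsign_disjoint => l; rewrite ffunE andbF. Qed.

Lemma opcomm_sym A B : opcomm A B -> opcomm B A.
Proof. by move=> AB s; rewrite AB. Qed.

Lemma opcomm_PX_PX u u' : opcomm (PX (C := C) u) (PX u').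
Proof. by move=> s; apply/ffunP=> x; rewrite !PXE xorvAC. Qed.

Lemma opcomm_PZ_PZ v v' : opcomm (PZ (C := C) v) (PZ v').
Proof. by move=> s; apply/ffunP=> x; rewrite !PZE mulrCA. Qed.

Lemma opcomm_PX_PZ u v : opcomm (PX (C := C) u) (PZ v) <-> zsign v u = 1.
Proof.
split=> [uv | vu1 s]; last first.
  by apply/ffunP=> x; rewrite PXE !PZE PXE zsign_xorv vu1 mulr1.
have := congr1 (fun s : st C I => s [ffun=> false]) (uv [ffun=> 1]).
by rewrite /= PXE !PZE PXE !ffunE !mulr1 zsign_xorv zsign0 mul1r.
Qed.

Lemma zsign_of_commute u v (e : bool) :
  (e = false <-> opcomm (PX (C := C) u) (PZ v)) -> zsign v u = sgnb C e.
Proof.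
move=> [e_comm comm_e]; case: e e_comm comm_e => /= [_ comm_e|e_comm _].
  by have [/opcomm_PX_PZ/comm_e|->] := zsign_pm1 v u.
exact/opcomm_PX_PZ/e_comm.
Qed.

Definition oplin O := forall (c d : C) s t,
  O [ffun x => c * s x + d * t x] = [ffun x => c * O s x + d * O t x].

Lemma oplinZ O c s : oplin O -> O [ffun x => c * s x] = [ffun x => c * O s x].
Proof.
move=> linO; have := linO c 0 s s.
have -> : [ffun x => c * s x + 0 * s x] = [ffun x => c * s x].
  by apply/ffunP=> x; rewrite !ffunE mul0r addr0.
by move=> ->; apply/ffunP=> x; rewrite !ffunE mul0r addr0.
Qed.

Lemma PX_lin u : oplin (PX u).
Proof. by move=> c d s t; apply/ffunP=> x; rewrite !(PXE, ffunE). Qed.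

Lemma PZ_lin v : oplin (PZ v).
Proof. by move=> c d s t; apply/ffunP=> x; rewrite !(PZE, ffunE); ring. Qed.

Lemma comp_lin A B : oplin A -> oplin B -> oplin (A \o B).
Proof. by move=> linA linB c d s t /=; rewrite linB linA. Qed.

Lemma opow_lin A e : oplin A -> oplin (opow A e).
Proof. by case: e => //= _ c d s t; apply/ffunP=> x; rewrite !ffunE. Qed.

Lemma projcE c P s : projc c P s = [ffun x => 2^-1 * s x + (c / 2) * P s x].
Proof. by apply/ffunP=> x; rewrite !ffunE; ring. Qed.

Lemma projc_lin c P : oplin P -> oplin (projc c P).
Proof. by move=> linP c1 d s t; rewrite !projcE linP; apply/ffunP=> x; rewrite !ffunE; ring. Qed.

Lemma Yq_lin p : oplin (Yq (C := C) p).
Proof. by move=> c d s t; apply/ffunP=> x; rewrite /Yq !ffunE; ring. Qed.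

Section Locality.
Variables (xs zs : seq (conf I)).

(* A lies in the (linear) bicommutant of the Paulis X^u, u in xs, and Z^v, v in zs. *)
Definition local_to A := oplin A /\
  forall O, oplin O -> {in xs, forall u, opcomm O (PX u)} ->
    {in zs, forall v, opcomm O (PZ v)} -> opcomm O A.

Lemma local_PX u : u \in xs -> local_to (PX u).
Proof. by split=> [|O _ OX _]; [apply: PX_lin | apply: OX]. Qed.

Lemma local_PZ v : v \in zs -> local_to (PZ v).
Proof. by split=> [|O _ _ OZ]; [apply: PZ_lin | apply: OZ]. Qed.

Lemma local_comp A B : local_to A -> local_to B -> local_to (A \o B).
Proof.
move=> [linA locA] [linB locB]; split=> [|O linO OX OZ s /=]; first exact: comp_lin.
by rewrite locA // locB.
Qed.

Lemma local_opow A e : local_to A -> local_to (opow A e).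
Proof. by case: e => //= _; split=> // c d s t; apply/ffunP=> x; rewrite !ffunE. Qed.

Lemma local_projc c P : local_to P -> local_to (projc c P).
Proof.
move=> [linP locP]; split=> [|O linO OX OZ s]; first exact: projc_lin.
by rewrite !projcE linO locP //; apply/ffunP=> x; rewrite !ffunE.
Qed.

Lemma local_Yq p : delta p \in xs -> delta p \in zs -> local_to (Yq (C := C) p).
Proof.
move=> px pz; split=> [|O linO OX OZ s]; first exact: Yq_lin.
rewrite /Yq (oplinZ _ _ linO); apply/ffunP=> x.
by rewrite !ffunE OX // OZ // PXE /PZ ffunE.
Qed.
End Locality.

Lemma local_commute xs zs xs' zs' A B :
  {in xs & zs', forall u v, zsign v u = 1} -> {in xs' & zs, forall u v, zsign v u = 1} ->
  local_to xs zs A -> local_to xs' zs' B -> opcomm A B.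
Proof.
move=> xz' x'z [linA locA] [linB locB].
apply: locB => // [u ux' | v vz']; apply: opcomm_sym.
  apply: locA => [|u' _|v vz]; first exact: PX_lin.
    exact: opcomm_PX_PX.
  by apply/opcomm_PX_PZ; apply: x'z.
apply: locA => [|u ux|v' _]; first exact: PZ_lin.
  by apply: opcomm_sym; apply/opcomm_PX_PZ; apply: xz'.
exact: opcomm_PZ_PZ.
Qed.
End PauliAlgebra.

Section OperatorProducts.
Variables (C : numClosedFieldType) (I J : finType).
Implicit Types (O : op C I) (F G : J -> op C I) (l : seq J).

Definition oprod_seq l F : op C I := foldr (fun j acc => F j \o acc) id l.

Lemma opcomm_oprod_seq O l F : (forall j, j \in l -> opcomm O (F j)) ->
  opcomm O (oprod_seq l F).
Proof.
elim: l => [//|j l IHl] OF s /=.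
rewrite OF ?mem_head // IHl // => i il.
by apply: OF; rewrite in_cons il orbT.
Qed.

Lemma oprod_seq_comp l F G : uniq l -> (forall i j, i != j -> opcomm (F i) (G j)) ->
  forall s, oprod_seq l F (oprod_seq l G s) = oprod_seq l (fun j => F j \o G j) s.
Proof.
move=> + FG; elim: l => [//|j l IHl] /andP[jl ul] s /=.
rewrite -(opcomm_oprod_seq (O := G j)) ?IHl // => i il t.
by rewrite FG //; apply: contraNneq jl => <-.
Qed.
End OperatorProducts.

Section Registers.
Variables (C : numClosedFieldType) (k q : nat).
Local Notation T := (fullI k q).
Implicit Types (x : conf T) (u v : conf 'I_k) (psi : st C 'I_k).
Implicit Types (t : 'I_q -> bool -> bool -> C) (w : bool -> bool -> st C 'I_k).

Definition mem_part (x : conf T) : conf 'I_k := [ffun i => x (inl i)].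

Lemma mem_part_memv u : mem_part (memv q u) = u.
Proof. by apply/ffunP=> i; rewrite !ffunE. Qed.

Lemma zsign_memv v x : zsign C (memv q v) x = zsign C v (mem_part x).
Proof.
rewrite /zsign big_sumType /= [X in _ * X]big1 ?mulr1 => [|p _]; last by rewrite !ffunE.
by apply: eq_bigr => i _; rewrite !ffunE.
Qed.

Definition pair_st t : st C (bool * 'I_q) :=
  [ffun y : conf (bool * 'I_q) => \prod_j t j (y (false, j)) (y (true, j))].

Definition prod_st t psi : st C T := tensor psi (pair_st t).

(* The pair (0,j), (1,j) entangled with the memory: its factor in prod_st is replaced by the
   memory state w b0 b1 attached to the values b0, b1 of its two qubits. *)
Definition open_st t j w : st C T :=
  [ffun x : conf T => (\prod_(i | i != j) t i (x (anc k false i)) (x (anc k true i)))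
             * w (x (anc k false j)) (x (anc k true j)) (mem_part x)].

Lemma prod_stE t psi x :
  prod_st t psi x = (\prod_j t j (x (anc k false j)) (x (anc k true j))) * psi (mem_part x).
Proof.
rewrite !ffunE mulrC; congr (_ * _).
by apply: eq_bigr => j _; rewrite !ffunE.
Qed.

Lemma open_st_ext t j w w' : (forall b0 b1 m, w b0 b1 m = w' b0 b1 m) ->
  open_st t j w = open_st t j w'.
Proof. by move=> ww'; apply/ffunP=> x; rewrite !ffunE ww'. Qed.

Lemma prod_st_open t j psi :
  prod_st t psi = open_st t j (fun b0 b1 => [ffun m => t j b0 b1 * psi m]).
Proof. by apply/ffunP=> x; rewrite prod_stE !ffunE (bigD1 j) //=; ring. Qed.

Lemma open_prod_st t j (t_j : bool -> bool -> C) psi :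
  open_st t j (fun b0 b1 => [ffun m => t_j b0 b1 * psi m])
  = prod_st (fun i => if i == j then t_j else t i) psi.
Proof.
apply/ffunP=> x; rewrite prod_stE !ffunE [in RHS](bigD1 j) //= eqxx mulrA; congr (_ * _).
by rewrite mulrC; congr (_ * _); apply: eq_bigr => i /negbTE->.
Qed.

Lemma prod_st_ext t t' psi : (forall j, t j =2 t' j) -> prod_st t psi = prod_st t' psi.
Proof.
move=> tt'; apply/ffunP=> x; rewrite !prod_stE; congr (_ * _).
by apply: eq_bigr => i _; apply: tt'.
Qed.

Lemma norm2_pair_st t t' :
  (forall j b0 b1, `|t j b0 b1| = `|t' j b0 b1|) -> norm2 (pair_st t) = norm2 (pair_st t').
Proof.
move=> tt'; apply: eq_bigr => y _.
rewrite !ffunE mulrC -normCK [RHS]mulrC -normCK !normr_prod; congr (_ ^+ 2).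
by apply: eq_bigr => j _; rewrite tt'.
Qed.

Lemma mem_part_xorv_memv x u : mem_part (xorv x (memv q u)) = xorv (mem_part x) u.
Proof. by apply/ffunP=> i; rewrite !ffunE. Qed.

Lemma mem_part_xorv_delta x p : mem_part (xorv x (delta (inr p))) = mem_part x.
Proof. by apply/ffunP=> i; rewrite !ffunE addbF. Qed.

Lemma PX_memv_open t j w u :
  PX (memv q u) (open_st t j w) = open_st t j (fun b0 b1 => PX u (w b0 b1)).
Proof.
apply/ffunP=> x; rewrite PXE !ffunE /anc /= !addbF mem_part_xorv_memv.
by congr (_ * _); apply: eq_bigr => i _; rewrite !ffunE !addbF.
Qed.

Lemma PZ_memv_open t j w v :
  PZ (memv q v) (open_st t j w) = open_st t j (fun b0 b1 => PZ v (w b0 b1)).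
Proof. by apply/ffunP=> x; rewrite PZE zsign_memv [in RHS]ffunE PZE ffunE; ring. Qed.

Lemma zsign_delta (p : T) x : zsign C (delta p) x = sgnb C (x p).
Proof.
rewrite /zsign (bigD1 p) //= big1 ?mulr1 => [|l /negbTE lp]; first by rewrite ffunE eqxx.
by rewrite ffunE lp.
Qed.

Lemma Zq_open t j w (al : bool) : Zq (anc k al j) (open_st t j w) =
  open_st t j (fun b0 b1 => [ffun m => sgnb C (if al then b1 else b0) * w b0 b1 m]).
Proof. by apply/ffunP=> x; rewrite /Zq PZE zsign_delta !ffunE; case: al; ring. Qed.

Lemma Xq_open t j w (al : bool) : Xq (anc k al j) (open_st t j w) =
  open_st t j (fun b0 b1 => w (if al then b0 else ~~ b0) (if al then ~~ b1 else b1)).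
Proof.
apply/ffunP=> x; rewrite /Xq PXE !ffunE /anc mem_part_xorv_delta ?ffunE.
congr (_ * _); last by case: al; rewrite !eqxx /= ?addbT ?addbF.
apply: eq_bigr => i ij; rewrite !ffunE.
have ne al' : (inr (al', i) == inr (al, j) :> T) = false.
  by apply/negbTE; apply: contra ij => /eqP[_ ->].
by rewrite !ne !addbF.
Qed.

Lemma Yq_open t j w : Yq (anc k true j) (open_st t j w) =
  open_st t j (fun b0 b1 => [ffun m => 'i * (sgnb C (~~ b1) * w b0 (~~ b1) m)]).
Proof. by apply/ffunP=> x; rewrite /Yq ffunE Zq_open Xq_open !ffunE; ring. Qed.

Lemma projc_open t j w w' (c : C) (O : op C T) : O (open_st t j w) = open_st t j w' ->
  projc c O (open_st t j w)
  = open_st t j (fun b0 b1 => [ffun m => (w b0 b1 m + c * w' b0 b1 m) / 2]).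
Proof. by move=> Ow; apply/ffunP=> x; rewrite ffunE Ow !ffunE; ring. Qed.
End Registers.

Section Protocol.
Variables (C : numClosedFieldType) (k q : nat) (a b : 'I_q -> conf 'I_k).
Variables (eta : 'I_q -> bool) (muX muZ mu0 mu1 : {ffun 'I_q -> bool}).
Hypothesis regular : forall i j, i != j -> zsign C (b j) (a i) = 1.

Local Notation T := (fullI k q).
Local Notation X0 j := (Xq (C := C) (anc k false j)).
Local Notation X1 j := (Xq (C := C) (anc k true j)).
Local Notation Z0 j := (Zq (C := C) (anc k false j)).
Local Notation Z1 j := (Zq (C := C) (anc k true j)).
Local Notation SX j := (PX (C := C) (memv q (a j))).
Local Notation SZ j := (PZ (C := C) (memv q (b j))).

Definition stageX j : op C T :=
  projc (sgnb C (muX j)) (SX j \o opow (Z0 j) (~~ eta j) \o opow (Z1 j) (eta j)).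
Definition stageZ j : op C T :=
  projc (sgnb C (muZ j)) (SZ j \o opow (Z0 j) (~~ eta j) \o opow (X1 j) (eta j)).
Definition stage0 j : op C T := projc (sgnb C (mu0 j)) (X0 j).
Definition stage1 j : op C T := projc (sgnb C (mu1 j)) (Yq (anc k true j)).
Definition correction j : op C T := opow (SZ j) (if eta j then mu1 j else mu0 j).

Definition gadget j : op C T := correction j \o (stage1 j \o (stage0 j \o (stageZ j \o stageX j))).

Definition xsupp j : seq (conf T) :=
  [:: memv q (a j); delta (anc k false j); delta (anc k true j)].
Definition zsupp j : seq (conf T) :=
  [:: memv q (b j); delta (anc k false j); delta (anc k true j)].

Lemma zsign_supp i j u v : i != j -> u \in xsupp i -> v \in zsupp j -> zsign C v u = 1.
Proof.
move=> ij; rewrite !inE => /or3P[] /eqP-> /or3P[] /eqP->;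
  try by rewrite zsign_memv mem_part_memv regular.
all: apply: zsign_disjoint => -[l|[al jl]]; rewrite !ffunE /anc //=.
all: rewrite ?andbF //; apply/negP=> /andP[/eqP[_ ->] /eqP[_ ji]].
all: by move: ij; rewrite ji eqxx.
Qed.

Lemma local_supp_commute (F G : 'I_q -> op C T) :
  (forall j, local_to (xsupp j) (zsupp j) (F j)) ->
  (forall j, local_to (xsupp j) (zsupp j) (G j)) ->
  forall i j, i != j -> opcomm (F i) (G j).
Proof.
move=> locF locG i j ij; apply: local_commute (locF i) (locG j) => u v ux vz.
  exact: zsign_supp ux vz.
by apply: zsign_supp ux vz; rewrite eq_sym.
Qed.

Section StageLocality.
Variable j : 'I_q.
Local Notation local := (local_to (xsupp j) (zsupp j)).

Let X_memv : memv q (a j) \in xsupp j. Proof. by rewrite !inE eqxx. Qed.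
Let Z_memv : memv q (b j) \in zsupp j. Proof. by rewrite !inE eqxx. Qed.
Let X_anc al : delta (anc k al j) \in xsupp j. Proof. by case: al; rewrite !inE eqxx ?orbT. Qed.
Let Z_anc al : delta (anc k al j) \in zsupp j. Proof. by case: al; rewrite !inE eqxx ?orbT. Qed.

Lemma stageX_local : local (stageX j).
Proof.
apply/local_projc/local_comp; last exact/local_opow/local_PZ.
by apply/local_comp; [apply: local_PX | apply/local_opow/local_PZ].
Qed.

Lemma stageZ_local : local (stageZ j).
Proof.
apply/local_projc/local_comp; last exact/local_opow/local_PX.
by apply/local_comp; [apply: local_PZ | apply/local_opow/local_PZ].
Qed.

Lemma stage0_local : local (stage0 j). Proof. exact/local_projc/local_PX. Qed.
Lemma stage1_local : local (stage1 j). Proof. exact/local_projc/local_Yq. Qed.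
Lemma stageC_local : local (correction j). Proof. exact/local_opow/local_PZ. Qed.
End StageLocality.
Local Hint Resolve stageX_local stageZ_local stage0_local stage1_local stageC_local : core.
Lemma Psi_f_gadgets psi :
  Psi_f a b eta muX muZ mu0 mu1 psi = oprod gadget (Psi_i q psi).
Proof.
have U := enum_uniq 'I_q.
change (oprod_seq (enum 'I_q) correction (oprod_seq (enum 'I_q) stage1
  (oprod_seq (enum 'I_q) stage0 (oprod_seq (enum 'I_q) stageZ
  (oprod_seq (enum 'I_q) stageX (Psi_i q psi))))) = oprod gadget (Psi_i q psi)).
rewrite (oprod_seq_comp (F := stageZ) U); last exact: local_supp_commute.
rewrite (oprod_seq_comp (F := stage0) U); last first.
  by apply: local_supp_commute => // j; apply: local_comp.
rewrite (oprod_seq_comp (F := stage1) U); last first.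
  by apply: local_supp_commute => // j; do !apply: local_comp.
rewrite (oprod_seq_comp (F := correction) U) //.
by apply: local_supp_commute => // j; do !apply: local_comp.
Qed.

Lemma stageX_open t j w : stageX j (open_st t j w) = open_st t j (fun b0 b1 =>
  [ffun m => (w b0 b1 m + sgnb C (muX j)
     * PX (a j) [ffun m => sgnb C (if eta j then b1 else b0) * w b0 b1 m] m) / 2]).
Proof.
apply: projc_open.
by case: (eta j) => /=; rewrite Zq_open PX_memv_open.
Qed.

Lemma stageZ_open t j w : stageZ j (open_st t j w) = open_st t j (fun b0 b1 =>
  [ffun m => (w b0 b1 m + sgnb C (muZ j)
     * PZ (b j) (if eta j then w b0 (~~ b1) else [ffun m => sgnb C b0 * w b0 b1 m]) m) / 2]).
Proof.
apply: projc_open.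
by case: (eta j) => /=; rewrite ?Zq_open ?Xq_open PZ_memv_open.
Qed.

Lemma stage0_open t j w : stage0 j (open_st t j w) = open_st t j (fun b0 b1 =>
  [ffun m => (w b0 b1 m + sgnb C (mu0 j) * w (~~ b0) b1 m) / 2]).
Proof. by rewrite /stage0 (projc_open _ (Xq_open _ _ _ _)). Qed.

Lemma stage1_open t j w : stage1 j (open_st t j w) = open_st t j (fun b0 b1 =>
  [ffun m => (w b0 b1 m + sgnb C (mu1 j) * ('i * (sgnb C (~~ b1) * w b0 (~~ b1) m))) / 2]).
Proof.
rewrite /stage1 (projc_open _ (Yq_open _ _ _)).
by apply: open_st_ext => b0 b1 m; rewrite !ffunE.
Qed.

Lemma stageC_open t j w : correction j (open_st t j w) = open_st t j (fun b0 b1 =>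
  if eta j then (if mu1 j then PZ (b j) (w b0 b1) else w b0 b1)
  else (if mu0 j then PZ (b j) (w b0 b1) else w b0 b1)).
Proof.
by rewrite /correction; case: (eta j); case: (mu0 j); case: (mu1 j); rewrite /= ?PZ_memv_open.
Qed.

Variable nu : 'I_q -> C.
Hypothesis zsign_self : forall j, zsign C (b j) (a j) = sgnb C (eta j).
Hypothesis nu_sqr : forall j, nu j * nu j = sgnb C (eta j).

Definition isqrt2 : C := (sqrtC 2)^-1.
Definition init_amp (b0 b1 : bool) : C := isqrt2 * (isqrt2 * (if b1 then 'i else 1)).
(* The final amplitude of pair j is out_phase j * out_amp j: a unit phase times an
   amplitude that does not depend on muX, muZ. *)
Definition out_phase j : C :=
  if eta j then (if mu1 j then 'i * sgnb C (muZ j) else 1)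
  else (if mu0 j then sgnb C (muZ j) else 1).
Definition out_amp j (b0 b1 : bool) : C :=
  if eta j then
    (if mu0 j then 0 else isqrt2) * (isqrt2 / 2) * (if b1 then 'i * sgnb C (mu1 j) else 1)
  else
    (if b0 then sgnb C (mu0 j) else 1) * (isqrt2 / 2)
    * (if mu1 j then 0 else isqrt2 * (if b1 then 'i else 1)).
Definition out_pair j (b0 b1 : bool) : C := out_phase j * out_amp j b0 b1.
Definition meas_coef j : C := (- 'i) ^+ eta j * nu j * sgnb C (muX j) * sgnb C (muZ j).
Definition meas_proj j : op C 'I_k := projc (meas_coef j) (sigma a b nu j).

Lemma normr_out_phase j : `|out_phase j| = 1.
Proof.
rewrite /out_phase; case: (eta j); case: (mu0 j); case: (mu1 j); case: (muZ j);
  by rewrite /sgnb ?normrM ?normCi ?normrN ?normr1 ?mulr1.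
Qed.

Lemma sgnb_sqr (e : bool) : sgnb C e * sgnb C e = 1.
Proof. by case: e; rewrite /sgnb ?mulrNN mulr1. Qed.

Lemma gadget_prod_st t j psi : t j =2 init_amp ->
  gadget j (prod_st t psi)
  = prod_st (fun i => if i == j then out_pair j else t i) (meas_proj j psi).
Proof.
move=> tj; rewrite /gadget /= (prod_st_open _ j) stageX_open stageZ_open stage0_open.
rewrite stage1_open stageC_open -open_prod_st; apply: open_st_ext => b0 b1 m.
have E1 := sgnb_sqr (muX j); have E2 := sgnb_sqr (muZ j); have E3 := zsign_sqr C (b j) m.
have Ei : 'i * 'i = -1 :> C by rewrite mulCii.
have Hn := nu_sqr j; have Hp := zsign_self j.
have sgnT : sgnb C true = -1 by []; have sgnF : sgnb C false = 1 by [].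
rewrite /meas_proj /sigma /out_pair /out_phase /out_amp /meas_coef.
move: Hn Hp; case: (eta j) => Hn Hp; case: (mu0 j); case: (mu1 j); case: b0; case: b1;
  rewrite /= ?expr0 ?expr1 !(PXE, PZE, ffunE) !tj /init_amp;
  rewrite ?zsign_xorv ?xorvK ?Hp ?sgnT ?sgnF;
  rewrite ?sgnT ?sgnF in Hn;
  by field: E1 E2 E3 Ei Hn.
Qed.

Lemma oprod_seq_gadgets l t psi : uniq l -> {in l, forall j, t j =2 init_amp} ->
  oprod_seq l gadget (prod_st t psi)
  = prod_st (fun i => if i \in l then out_pair i else t i) (oprod_seq l meas_proj psi).
Proof.
elim: l => [|j l IHl] /= => [_ _|/andP[jl ul] tl]; first exact: prod_st_ext.
rewrite IHl // => [|i il]; last by apply: tl; rewrite in_cons il orbT.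
rewrite gadget_prod_st /= ?(negbTE jl); last by apply: tl; rewrite mem_head.
by apply: prod_st_ext => i; rewrite in_cons; case: eqP => [->|].
Qed.

Lemma Psi_f_prod_st psi :
  Psi_f a b eta muX muZ mu0 mu1 psi = prod_st out_pair (meas a b nu eta muX muZ psi).
Proof.
rewrite Psi_f_gadgets.
change (oprod_seq (enum 'I_q) gadget (prod_st (fun _ => init_amp) psi)
  = prod_st out_pair (meas a b nu eta muX muZ psi)).
rewrite oprod_seq_gadgets ?enum_uniq //.
by apply: prod_st_ext => i; rewrite mem_enum.
Qed.
End Protocol.

Section Hermiticity.
Variables (C : numClosedFieldType) (I : finType).
Implicit Types (u v : conf I) (s : st C I).

Definition ket (y : conf I) : st C I := [ffun x => (x == y)%:R].

Lemma dot_ket_r s y : dot s (ket y) = (s y)^*.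
Proof.
rewrite /dot (bigD1 y) //= big1 ?addr0 => [|x xy]; rewrite ffunE.
  by rewrite eqxx mulr1.
by rewrite (negbTE xy) mulr0.
Qed.

Lemma dot_ket_l s y : dot (ket y) s = s y.
Proof.
rewrite /dot (bigD1 y) //= big1 ?addr0 => [|x xy]; rewrite ffunE.
  by rewrite eqxx rmorph1 mul1r.
by rewrite (negbTE xy) rmorph0 mul0r.
Qed.

(* Compare the matrix entries <u| . |0> and <0| . |u> of the hermitian operator. *)
Lemma hermitian_phase_sqr u v (nu : C) (e : bool) :
  nu \in [:: 1; -1; 'i; - 'i] -> zsign C v u = sgnb C e ->
  herm_op (fun s => [ffun x => nu * PX u (PZ v s) x]) -> nu * nu = sgnb C e.
Proof.
move=> nu_phase vu herm.
have := herm (ket u) (ket [ffun=> false]).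
rewrite dot_ket_l dot_ket_r !(PXE, PZE, ffunE).
have -> : xorv u u = [ffun=> false] by apply/ffunP=> i; rewrite !ffunE addbb.
have -> : xorv [ffun=> false] u = u by apply/ffunP=> i; rewrite !ffunE.
rewrite zsign0 !eqxx vu !mulr1 => nu_conj.
have nuCnu : nu^* * nu = 1.
  rewrite mulrC -normCK; move: nu_phase; rewrite !inE => /or4P[] /eqP->;
  by rewrite ?normrN ?normr1 ?normCi expr1n.
case: e nu_conj {vu} => /= nu_conj; rewrite ?mulrN1 ?mulr1 ?rmorphN in nu_conj.
  by rewrite {1}nu_conj mulNr nuCnu.
by rewrite {1}nu_conj nuCnu.
Qed.
End Hermiticity.

Theorem lemma8 (C : numClosedFieldType) (k q : nat)
  (a b : 'I_q -> conf 'I_k) (nu : 'I_q -> C) (eta : 'I_q -> bool)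
  (Hnu : forall j, nu j \in [:: 1; -1; 'i; - 'i])
  (Hherm : forall j, herm_op (sigma a b nu j))
  (Heta : forall j, eta j = false <-> opcomm (PX (C := C) (a j)) (PZ (b j)))
  (Hcomm : forall i j, opcomm (sigma a b nu i) (sigma a b nu j))
  (Hreg : forall i j, i != j -> opcomm (PX (C := C) (a i)) (PZ (b j)))
  (psi : st C 'I_k) (Hpsi : norm2 psi = 1)
  (mu0 mu1 : {ffun 'I_q -> bool}) :
  exists phi : {ffun 'I_q -> bool} -> {ffun 'I_q -> bool} -> st C (bool * 'I_q),
    (forall muX muZ : {ffun 'I_q -> bool},
        Psi_f a b eta muX muZ mu0 mu1 psi
        = tensor (meas a b nu eta muX muZ psi) (phi muX muZ))
    /\ (forall muX muZ muX' muZ' : {ffun 'I_q -> bool},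
        norm2 (phi muX muZ) = norm2 (phi muX' muZ')).
Proof.
have regular i j : i != j -> zsign C (b j) (a i) = 1.
  by move=> ij; apply/opcomm_PX_PZ/Hreg.
have zsign_self j := zsign_of_commute (Heta j).
have nu_sqr j := hermitian_phase_sqr (Hnu j) (zsign_self j) (Hherm j).
exists (fun muX muZ => pair_st (out_pair C eta muZ mu0 mu1)).
split=> [muX muZ|muX muZ muX' muZ'].
  exact: Psi_f_prod_st.
by apply: norm2_pair_st => j b0 b1; rewrite /out_pair !normrM !normr_out_phase.
Qed.
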